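(* Let $L$ be an $\mathbb{M}$-compositional varietal family of logics and let $K\subseteq\mathbb{M}_\xi\Sigma$ be a language with a syntactic algebra. The following statements are equivalent (where $\Delta$ ranges over sort-wise finite subfamilies of $L$, in items (4)–(7) those for which the theory algebras $\Theta_\Delta$ are defined, and $\Gamma$ ranges over alphabets): (1) $K$ is $L$-definable; (2) $K$ is recognised by some $L$-definable algebra; (3) $\mathrm{Syn}(K)$ is $L$-definable; (4) $\mathrm{Syn}(K)$ is a quotient of $\Theta_\Delta\Gamma$ for some $\Delta$ and $\Gamma$; (5) $\mathrm{syn}_K=\varrho\circ\theta_\Delta$ for some $\Delta$ and some surjective morphism $\varrho:\Theta_\Delta\Sigma\to\mathrm{Syn}(K)$; (6) $K$ is recognised by $\Theta_\Delta\Gamma$ for some $\Delta$ and $\Gamma$; (7) $\theta_\Delta:\mathbb{M}\Sigma\to\Theta_\Delta\Sigma$ recognises $K$ for some $\Delta$; (8) $\mathrm{Syn}(K)$ satisfies every $\mathbb{M}$-inequality $s\leq t$ that holds in every theory algebra $\Theta_\Delta\Gamma$; (9) there is some $\Delta$ such that for all $s,t\in\mathbb{M}_\xi\Sigma$, $s\sqsubseteq_{\Delta}t$ implies ($s\in K\Rightarrow t\in K$); (10) ${\sqsubseteq_\Delta}\subseteq{\preceq_K}$ for some $\Delta$.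
   Context: Fix a set $\Xi$ of sorts; $\mathsf{Pos}^\Xi$: $\Xi$-sorted families of partial orders with sort-wise monotone maps. $\mathbb{M}$ is a monad on $\mathsf{Pos}^\Xi$ ($\mathrm{flat},\mathrm{sing}$) preserving injective, surjective, bijective functions and preimages and using the standard ordering. $\mathbb{M}$-algebras $\langle A,\pi\rangle$: $\pi\circ\mathbb{M}\pi=\pi\circ\mathrm{flat}$, $\pi\circ\mathrm{sing}=\mathrm{id}$; morphisms commute with products. Finitary: sort-wise finite and finitely generated. Quotient of $\mathfrak{B}$: codomain of a surjective morphism from $\mathfrak{B}$. A preorder $\sqsubseteq$ containing the order is a congruence ordering if $\mathbb{M}q(s)\leq\mathbb{M}q(t)\Rightarrow\pi(s)\sqsubseteq\pi(t)$, $q$ the quotient map onto the ordered set of classes; then the quotient is an algebra with $\pi\circ\mathbb{M}q=q\circ\pi$. Alphabet: finite unordered $\Sigma$; language: $K\subseteq\mathbb{M}_\xi\Sigma$; a morphism $f:\mathbb{M}\Sigma\to\mathfrak{A}$ recognises $K$ if $K=f^{-1}[P]$ for upwards closed $P\subseteq A_\xi$; an algebra recognises $K$ if some morphism into it does. Contexts with hole of sort $\zeta$: $p\in\mathbb{M}(\Sigma+\{\Box\})$, $p[s]$ the image under the algebra morphism extending $\Box\mapsto s$, $c\mapsto\mathrm{sing}(c)$; $p^{-1}[K]=\{s:p[s]\in K\}$. Syntactic congruence: $s\preceq_K t$ ($s,t$ of sort $\zeta$) iff $p[s]\in K\Rightarrow p[t]\in K$ for all contexts $p\in\mathbb{M}_\xi(\Sigma+\{\Box\})$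 with hole of sort $\zeta$; $K$ has a syntactic algebra if $\preceq_K$ is a congruence ordering with sort-wise finite quotient $\mathrm{Syn}(K)$, $\mathrm{syn}_K$ the quotient morphism. Variety of languages: closed under finite unions, intersections, inverse algebra morphisms $\mathbb{M}\Sigma\to\mathbb{M}\Gamma$, derivatives. Logic: $\Xi$-sorted formulae, models, satisfaction; $M\sqsubseteq_\Delta N$ iff every formula in $\Delta$ true in $M$ is true in $N$. A family of logics $L$ assigns to each alphabet a logic $L[\Sigma]$ with models $\mathbb{M}\Sigma$, and to $f:\Sigma\to\Gamma$ a sort-preserving $\lambda_f:L[\Gamma]\to L[\Sigma]$ with $s\models\lambda_f(\varphi)\iff\mathbb{M}f(s)\models\varphi$. $L$-definable language: $\{s:s\models\varphi\}$ for a formula $\varphi$ of the right sort; for a finite ordered $C$, $K\subseteq\mathbb{M}C$ is $L$-definable if its preimage under $\mathbb{M}\iota$ ($\iota$ identity from $C$ with trivial order) is. Varietal: $L$-definable languages form a variety. Subfamily $\Delta$: $\Delta[\Sigma]\subseteq L[\Sigma]$, sort-wise finite if finite in each sort up to equivalence; $\sqsubseteq_\Delta$ on $\mathbb{M}\Sigma$ means $\sqsubseteq_{\Delta[\Sigma]}$. $L$ is $\mathbb{M}$-compositional if for every finite subfamily $\Phi$ there is a sort-wise finite $\Delta\supseteq\Phi$ with each $\sqsubseteq_{\Delta[\Sigma]}$ a congruence ordering; then $\Theta_\Delta\Sigma:=\mathbb{M}\Sigma/{\sqsubseteq_{\Delta[\Sigma]}}$ with quotient morphism $\theta_\Delta$.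 $C\subseteq A$ finite is $L$-definably embedded if $\pi^{-1}(\uparrow a)\cap\mathbb{M}C$ is $L$-definable for all $a$; $\mathfrak{A}$ is $L$-definable if finitary and all finite subsets are $L$-definably embedded. $\mathbb{M}$-inequalities: for finite unordered $X$, $\widehat{\mathbb{M}}X$ consists of families $(t_\beta)$, indexed by morphisms $\beta:\mathbb{M}X\to\mathfrak{A}$ into finitary algebras, with $t_\beta\in A_\xi$ and $\varphi(t_\beta)=t_{\varphi\circ\beta}$ for morphisms $\varphi$ of finitary algebras (componentwise order), $\mathrm{val}(t;\beta)=t_\beta$; an inequality $s\leq t$ ($s,t\in\widehat{\mathbb{M}}X$ of equal sort) holds in a finitary $\mathfrak{A}$ if $\mathrm{val}(s;\beta)\leq\mathrm{val}(t;\beta)$ for all $\beta:\mathbb{M}X\to\mathfrak{A}$. *)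

From Stdlib Require Import List FunctionalExtensionality PropExtensionality ProofIrrelevance.
Unset Implicit Arguments.


Record SPos (Xi : Type) := {
  car :> Xi -> Type;
  le : forall x, car x -> car x -> Prop;
  le_refl : forall x a, @le x a a;
  le_trans : forall x a b c, @le x a b -> @le x b c -> @le x a c;
  le_antisym : forall x a b, @le x a b -> @le x b a -> a = b }.
Arguments le {Xi} s {x} _ _.
Arguments car {Xi} s _.
Arguments le_refl {Xi s x} a.
Arguments le_trans {Xi s} {x a b c} _ _.
Arguments le_antisym {Xi s} {x a b} _ _.

Record SMap Xi (A B : SPos Xi) := {
  fn :> forall x, A x -> B x;
  fn_mono : forall x (a b : A x), le A a b -> le B (fn x a) (fn x b) }.
Arguments SMap {Xi} A B.
Arguments fn {Xi A B} s x _.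
Arguments fn_mono {Xi A B} s {x a b} _.

Definition idmap Xi (A : SPos Xi) : SMap A A.
Proof. refine {| fn := fun x (a : A x) => a |}. auto. Defined.
Arguments idmap {Xi} A.

Definition compmap Xi (A B C : SPos Xi) (g : SMap B C) (f : SMap A B) : SMap A C.
Proof. refine {| fn := fun x (a : A x) => g x (f x a) |}. intros x a b h. do 2 apply fn_mono. exact h. Defined.
Arguments compmap {Xi A B C} g f.

Definition sinjective Xi (A B : SPos Xi) (f : SMap A B) : Prop :=
  forall x (a b : A x), f x a = f x b -> a = b.
Definition ssurjective Xi (A B : SPos Xi) (f : SMap A B) : Prop :=
  forall x (b : B x), exists a : A x, f x a = b.
Arguments sinjective {Xi A B} f.
Arguments ssurjective {Xi A B} f.

Definition subP Xi (A : SPos Xi) (C : forall x, A x -> Prop) : SPos Xi.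
Proof.
  refine {| car := fun x => {a : A x | C x a};
            le := fun x a b => le A (proj1_sig a) (proj1_sig b) |}.
  - intros; apply le_refl.
  - intros x a b c h1 h2; eapply le_trans; eauto.
  - intros x [a ha] [b hb] h1 h2; simpl in *.
    pose proof (le_antisym h1 h2); subst. f_equal. apply proof_irrelevance.
Defined.
Arguments subP {Xi} A C.

Definition incl Xi (A : SPos Xi) (C : forall x, A x -> Prop) : SMap (subP A C) A.
Proof. refine {| fn := fun x (a : subP A C x) => proj1_sig a |}. auto. Defined.
Arguments incl {Xi} A C.

Definition LeRel Xi (A : SPos Xi) : SPos Xi.
Proof.
  refine {| car := fun x => {p : A x * A x | le A (fst p) (snd p)};
            le := fun x p q => le A (fst (proj1_sig p)) (fst (proj1_sig q)) /\
                               le A (snd (proj1_sig p)) (snd (proj1_sig q)) |}.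
  - intros; split; apply le_refl.
  - intros x a b c [h1 h2] [h3 h4]; split; eapply le_trans; eauto.
  - intros x [[a1 a2] ha] [[b1 b2] hb] [h1 h2] [h3 h4]; simpl in *.
    pose proof (le_antisym h1 h3); pose proof (le_antisym h2 h4); subst.
    f_equal. apply proof_irrelevance.
Defined.
Arguments LeRel {Xi} A.

Definition pr0 Xi (A : SPos Xi) : SMap (LeRel A) A.
Proof. refine {| fn := fun x (p : LeRel A x) => fst (proj1_sig p) |}. intros x a b [h _]; exact h. Defined.
Definition pr1 Xi (A : SPos Xi) : SMap (LeRel A) A.
Proof. refine {| fn := fun x (p : LeRel A x) => snd (proj1_sig p) |}. intros x a b [_ h]; exact h. Defined.
Arguments pr0 {Xi} A.
Arguments pr1 {Xi} A.

Record Monad (Xi : Type) := {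
  MO :> SPos Xi -> SPos Xi;
  Mmap : forall A B, SMap A B -> SMap (MO A) (MO B);
  flat : forall A, SMap (MO (MO A)) (MO A);
  sing : forall A, SMap A (MO A);
  Mmap_id : forall A x (s : MO A x), Mmap _ _ (idmap A) x s = s;
  Mmap_comp : forall A B C (f : SMap A B) (g : SMap B C) x (s : MO A x),
      Mmap _ _ (compmap g f) x s = Mmap _ _ g x (Mmap _ _ f x s);
  flat_nat : forall A B (f : SMap A B) x (s : MO (MO A) x),
      Mmap _ _ f x (flat A x s) = flat B x (Mmap _ _ (Mmap _ _ f) x s);
  sing_nat : forall A B (f : SMap A B) x (a : A x),
      Mmap _ _ f x (sing A x a) = sing B x (f x a);
  flat_sing : forall A x (s : MO A x), flat A x (sing (MO A) x s) = s;
  flat_Msing : forall A x (s : MO A x), flat A x (Mmap _ _ (sing A) x s) = s;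
  flat_assoc : forall A x (s : MO (MO (MO A)) x),
      flat A x (flat (MO A) x s) = flat A x (Mmap _ _ (flat A) x s);
  M_inj : forall A B (f : SMap A B), sinjective f -> sinjective (Mmap _ _ f);
  M_surj : forall A B (f : SMap A B), ssurjective f -> ssurjective (Mmap _ _ f);
  M_bij : forall A B (f : SMap A B), sinjective f -> ssurjective f ->
      sinjective (Mmap _ _ f) /\ ssurjective (Mmap _ _ f);
  (* preservation of preimages: (Mf)^{-1}[M P] = M (f^{-1}[P]) *)
  M_preim : forall A B (f : SMap A B) (P : forall x, B x -> Prop) x (s : MO A x),
      (exists u : MO (subP B P) x, Mmap _ _ (incl B P) x u = Mmap _ _ f x s) ->
      exists v : MO (subP A (fun y a => P y (f y a))) x, Mmap _ _ (incl _ _) x v = s;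
  M_std : forall A x (s t : MO A x),
      le (MO A) s t <-> exists u : MO (LeRel A) x,
          Mmap _ _ (pr0 A) x u = s /\ Mmap _ _ (pr1 A) x u = t }.
Arguments Mmap {Xi} m {A B} f.
Arguments flat {Xi} m {A}.
Arguments sing {Xi} m {A}.

Definition FinTot Xi (T : Xi -> Type) : Prop :=
  exists l : list {x : Xi & T x}, forall x (a : T x), In (existT _ x a) l.
Definition FinSorted Xi (A : SPos Xi) : Prop :=
  forall x, exists l : list (A x), forall a, In a l.
Arguments FinTot {Xi} T.
Arguments FinSorted {Xi} A.

Definition disc Xi (T : Xi -> Type) : SPos Xi.
Proof.
  refine {| car := T; le := fun x a b => a = b |}; intros; subst; auto.
Defined.
Arguments disc {Xi} T.

Definition discmap Xi (T U : Xi -> Type) (f : forall x, T x -> U x) : SMap (disc T) (disc U).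
Proof. refine (Build_SMap _ (disc T) (disc U) f _). intros x a b h; simpl in *; subst; reflexivity. Defined.
Arguments discmap {Xi T U} f.

Record Alphabet Xi := { alph :> Xi -> Type; alph_fin : FinTot alph }.
Definition APos Xi (S : Alphabet Xi) : SPos Xi := disc S.
Arguments APos {Xi} S.
Arguments Alphabet : clear implicits.
Arguments alph {Xi} a _.
Arguments alph_fin {Xi} a.

Record Alg Xi (M : Monad Xi) := {
  acar :> SPos Xi;
  api : SMap (M acar) acar;
  alg_assoc : forall x (s : M (M acar) x), api x (Mmap M api x s) = api x (flat M x s);
  alg_unit : forall x (a : acar x), api x (sing M x a) = a }.
Arguments api {Xi M} _.
Arguments Alg {Xi} M.
Arguments acar {Xi M} _.
Arguments alg_assoc {Xi M} _ _ _.
Arguments alg_unit {Xi M} _ _ _.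

Record Hom Xi (M : Monad Xi) (A B : Alg M) := {
  hmap :> SMap A B;
  hcomm : forall x (s : M A x), hmap x (api A x s) = api B x (Mmap M hmap x s) }.
Arguments Hom {Xi M} A B.
Arguments hmap {Xi M A B} h.
Arguments hcomm {Xi M A B} h x s.

Definition compH Xi (M : Monad Xi) (A B C : Alg M) (g : Hom B C) (f : Hom A B) : Hom A C.
Proof.
  refine {| hmap := compmap g f |}.
  intros x s. simpl. rewrite (hcomm f), (hcomm g), Mmap_comp. reflexivity.
Defined.
Arguments compH {Xi M A B C} g f.

Definition FreeAlg Xi (M : Monad Xi) (S : Alphabet Xi) : Alg M.
Proof.
  refine {| acar := M (APos S); api := flat M |}.
  - intros; symmetry; apply flat_assoc.
  - intros; apply flat_sing.
Defined.
Arguments FreeAlg {Xi} M S.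

Definition Lang Xi (M : Monad Xi) (S : Alphabet Xi) (xi : Xi) := M (APos S) xi -> Prop.
Arguments Lang {Xi} M S xi.

Definition holeT Xi (S : Alphabet Xi) (z : Xi) : Xi -> Type := fun x => (S x + (z = x))%type.
Arguments holeT {Xi} S z _.

Lemma holeT_fin Xi (S : Alphabet Xi) (z : Xi) : FinTot (holeT S z).
Proof.
  destruct (alph_fin S) as [l Hl].
  exists (existT (holeT S z) z (inr eq_refl) ::
          map (fun p => existT (holeT S z) (projT1 p) (inl (projT2 p))) l).
  intros x [a|e].
  - right. apply (in_map (fun p => existT (holeT S z) (projT1 p) (inl (projT2 p))) l (existT _ x a)).
    apply Hl.
  - left. destruct e. reflexivity.
Qed.

Arguments holeT_fin {Xi} S z.
(* the alphabet Sigma + {box}, box of sort z *)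
Definition SH Xi (S : Alphabet Xi) (z : Xi) : Alphabet Xi :=
  {| alph := holeT S z; alph_fin := holeT_fin S z |}.
Arguments SH {Xi} S z.

Definition fillmap Xi (M : Monad Xi) (S : Alphabet Xi) (z : Xi) (s : M (APos S) z)
  : SMap (APos (SH S z)) (M (APos S)).
Proof.
  refine {| fn := fun x (c : APos (SH S z) x) => match c with
                             | inl a => sing M (A := APos S) x a
                             | inr e => eq_rect z (fun y => M (APos S) y) s x e
                             end |}.
  intros x a b h; simpl in h; subst; apply le_refl.
Defined.
Arguments fillmap {Xi} M {S z} s.

(* p[s] : image of p under the algebra morphism extending box |-> s, c |-> sing c *)
Definition fill Xi (M : Monad Xi) (S : Alphabet Xi) (z xi : Xi)
  (p : M (APos (SH S z)) xi) (s : M (APos S) z) : M (APos S) xi :=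
  flat M xi (Mmap M (fillmap M s) xi p).
Arguments fill {Xi M S z xi} p s.

Definition synle Xi (M : Monad Xi) (S : Alphabet Xi) (xi : Xi) (K : Lang M S xi)
  (z : Xi) (s t : M (APos S) z) : Prop :=
  forall p : M (APos (SH S z)) xi, K (fill p s) -> K (fill p t).
Arguments synle {Xi M S xi} K {z} s t.

Record CPre Xi (A : SPos Xi) := {
  rel :> forall x, A x -> A x -> Prop;
  rel_refl : forall x a, rel x a a;
  rel_trans : forall x a b c, rel x a b -> rel x b c -> rel x a c;
  rel_cont : forall x a b, le A a b -> rel x a b }.
Arguments CPre {Xi} A.
Arguments rel {Xi A} _ x _ _.
Arguments rel_refl {Xi A} _ {x} a.
Arguments rel_trans {Xi A} _ {x a b c} _ _.
Arguments rel_cont {Xi A} _ {x a b} _.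

Definition cls Xi (A : SPos Xi) (R : CPre A) x (a : A x) : A x -> Prop :=
  fun b => R x a b /\ R x b a.
Arguments cls {Xi A} R {x} a _.

Definition QPos Xi (A : SPos Xi) (R : CPre A) : SPos Xi.
Proof.
  refine {| car := fun x => {P : A x -> Prop | exists a, P = cls R a};
            le := fun x P Q => exists a b, proj1_sig P a /\ proj1_sig Q b /\ R x a b |}.
  - intros x [P [a ->]]. exists a, a. simpl. unfold cls.
    repeat split; apply rel_refl.
  - intros x [P [p ->]] [Q [q ->]] [U [u ->]] [a [b [ha [hb hab]]]] [b' [c [hb' [hc hbc]]]].
    simpl in *. unfold cls in *. exists a, c. repeat split; try tauto.
    apply rel_trans with b; [tauto|].
    apply rel_trans with q; [tauto|].
    apply rel_trans with b'; tauto.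
  - intros x [P hP] [Q hQ] [a [b [ha [hb hab]]]] [b' [a' [hb' [ha' hba]]]].
    simpl in *.
    assert (E : P = Q).
    { destruct hP as [p Ep]; destruct hQ as [q Eq]; subst P Q. unfold cls in *.
      assert (Hpq : R x p q).
      { apply rel_trans with a; [tauto|]. apply rel_trans with b; tauto. }
      assert (Hqp : R x q p).
      { apply rel_trans with b'; [tauto|]. apply rel_trans with a'; tauto. }
      apply functional_extensionality; intro c; apply propositional_extensionality.
      split; intros [h1 h2]; split; eauto using rel_trans. }
    subst Q. f_equal. apply proof_irrelevance.
Defined.
Arguments QPos {Xi A} R.

Definition qmap Xi (A : SPos Xi) (R : CPre A) : SMap A (QPos R).
Proof.
  refine (Build_SMap _ A (QPos R) (fun x a => exist _ (cls R a) (ex_intro _ a eq_refl)) _).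
  intros x a b h. exists a, b. simpl. unfold cls.
  repeat split; try apply rel_refl. apply rel_cont; exact h.
Defined.
Arguments qmap {Xi A} R.

Definition cong_ord Xi (M : Monad Xi) (A : Alg M) (R : CPre A) : Prop :=
  forall x (s t : M A x),
    le (M (QPos R)) (Mmap M (qmap R) x s) (Mmap M (qmap R) x t) -> R x (api A x s) (api A x t).
Arguments cong_ord {Xi M A} R.

Definition IsCongOrd Xi (M : Monad Xi) (A : Alg M) (r : forall x, A x -> A x -> Prop) : Prop :=
  exists R : CPre A, (forall x a b, R x a b <-> r x a b) /\ cong_ord R.
Arguments IsCongOrd {Xi M} A r.

Definition HasSynAlg Xi (M : Monad Xi) (S : Alphabet Xi) (xi : Xi) (K : Lang M S xi) : Prop :=
  exists R : CPre (FreeAlg M S),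
    (forall z s t, R z s t <-> synle K s t) /\ cong_ord R /\ FinSorted (QPos R).
Arguments HasSynAlg {Xi M S xi} K.

(* (T, syn) is (a copy of) the quotient algebra M S / (preceq_K), i.e. Syn(K) with syn_K *)
Definition IsSynAlg Xi (M : Monad Xi) (S : Alphabet Xi) (xi : Xi) (K : Lang M S xi)
  (T : Alg M) (syn : Hom (FreeAlg M S) T) : Prop :=
  ssurjective syn /\ forall z (s t : M (APos S) z), le T (syn z s) (syn z t) <-> synle K s t.
Arguments IsSynAlg {Xi M S xi} K {T} syn.

Definition recog Xi (M : Monad Xi) (S : Alphabet Xi) (A : Alg M) (f : Hom (FreeAlg M S) A)
  (xi : Xi) (K : Lang M S xi) : Prop :=
  exists P : A xi -> Prop, (forall a b, le A a b -> P a -> P b) /\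
    forall s, K s <-> P (f xi s).
Arguments recog {Xi M S A} f {xi} K.

Definition algRecog Xi (M : Monad Xi) (S : Alphabet Xi) (A : Alg M) (xi : Xi) (K : Lang M S xi) : Prop :=
  exists f : Hom (FreeAlg M S) A, recog f K.
Arguments algRecog {Xi M S} A {xi} K.

Definition FinSubset Xi (A : SPos Xi) (C : forall x, A x -> Prop) : Prop :=
  FinTot (fun x => {a : A x | C x a}).
Arguments FinSubset {Xi A} C.

Definition FinGen Xi (M : Monad Xi) (A : Alg M) : Prop :=
  exists C : forall x, A x -> Prop, FinSubset C /\
    forall x (a : A x), exists u : M (subP A C) x, api A x (Mmap M (incl A C) x u) = a.
Arguments FinGen {Xi M} A.

Definition Finitary Xi (M : Monad Xi) (A : Alg M) : Prop := FinSorted A /\ FinGen A.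
Arguments Finitary {Xi M} A.

Definition isQuot Xi (M : Monad Xi) (A B : Alg M) : Prop :=
  exists h : Hom A B, ssurjective h.
Arguments isQuot {Xi M} A B.

Record Family Xi (M : Monad Xi) := {
  form : Alphabet Xi -> Xi -> Type;
  sat : forall (S : Alphabet Xi) xi, form S xi -> M (APos S) xi -> Prop;
  lam : forall (S G : Alphabet Xi) (f : forall x, S x -> G x) xi, form G xi -> form S xi;
  lam_sat : forall (S G : Alphabet Xi) (f : forall x, S x -> G x) xi (phi : form G xi)
      (s : M (APos S) xi),
      sat S xi (lam S G f xi phi) s <-> sat G xi phi (Mmap M (discmap f) xi s) }.
Arguments Family {Xi} M.
Arguments form {Xi M} _ _ _.
Arguments sat {Xi M} _ {S xi} _ _.
Arguments lam {Xi M} _ {S G} _ {xi} _.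

Definition defL Xi (M : Monad Xi) (L : Family M) (S : Alphabet Xi) (xi : Xi) (K : Lang M S xi) : Prop :=
  exists phi : form L S xi, forall s, K s <-> sat L phi s.
Arguments defL {Xi M} L {S xi} K.

Definition Varietal Xi (M : Monad Xi) (L : Family M) : Prop :=
  (forall S xi, defL L (fun _ : M (APos S) xi => False)) /\
  (forall S xi, defL L (fun _ : M (APos S) xi => True)) /\
  (forall S xi (K1 K2 : Lang M S xi), defL L K1 -> defL L K2 -> defL L (fun s => K1 s \/ K2 s)) /\
  (forall S xi (K1 K2 : Lang M S xi), defL L K1 -> defL L K2 -> defL L (fun s => K1 s /\ K2 s)) /\
  (forall S G (h : Hom (FreeAlg M S) (FreeAlg M G)) xi (K : Lang M G xi),
      defL L K -> defL L (fun s => K (h xi s))) /\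
  (forall S xi (K : Lang M S xi) z (p : M (APos (SH S z)) xi),
      defL L K -> defL L (fun s : M (APos S) z => K (fill p s))).
Arguments Varietal {Xi M} L.

Definition Subfam Xi (M : Monad Xi) (L : Family M) := forall S xi, form L S xi -> Prop.
Arguments Subfam {Xi M} L.

Definition feq Xi (M : Monad Xi) (L : Family M) S xi (phi psi : form L S xi) : Prop :=
  forall s, sat L phi s <-> sat L psi s.
Arguments feq {Xi M L S xi} phi psi.

Definition SortFin Xi (M : Monad Xi) (L : Family M) (D : Subfam L) : Prop :=
  forall S xi, exists l : list (form L S xi),
    forall phi, D S xi phi -> exists psi, In psi l /\ feq phi psi.
Arguments SortFin {Xi M L} D.

Definition FinFam Xi (M : Monad Xi) (L : Family M) (P : Subfam L) : Prop :=
  exists l : list {S : Alphabet Xi & {xi : Xi & form L S xi}},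
    forall S xi phi, P S xi phi -> In (existT _ S (existT _ xi phi)) l.
Arguments FinFam {Xi M L} P.

Definition tle Xi (M : Monad Xi) (L : Family M) (D : Subfam L) (S : Alphabet Xi)
  x (s t : M (APos S) x) : Prop :=
  forall phi, D S x phi -> sat L phi s -> sat L phi t.
Arguments tle {Xi M L} D S {x} s t.

(* the theory algebras Theta_D are defined *)
Definition ThetaDef Xi (M : Monad Xi) (L : Family M) (D : Subfam L) : Prop :=
  forall S, IsCongOrd (FreeAlg M S) (fun x => @tle _ _ _ D S x).
Arguments ThetaDef {Xi M L} D.

Definition Compositional Xi (M : Monad Xi) (L : Family M) : Prop :=
  forall P : Subfam L, FinFam P ->
    exists D : Subfam L, SortFin D /\ (forall S xi phi, P S xi phi -> D S xi phi) /\ ThetaDef D.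
Arguments Compositional {Xi M} L.

(* (T, th) is (a copy of) Theta_D G = M G / sqsubseteq_{D[G]} with theta_D *)
Definition IsTheta Xi (M : Monad Xi) (L : Family M) (D : Subfam L) (G : Alphabet Xi)
  (T : Alg M) (th : Hom (FreeAlg M G) T) : Prop :=
  ssurjective th /\ forall z (s t : M (APos G) z), le T (th z s) (th z t) <-> tle D G s t.
Arguments IsTheta {Xi M L} D G {T} th.

Definition idC Xi (A : SPos Xi) (C : forall x, A x -> Prop) (hC : FinSubset C) : Alphabet Xi :=
  {| alph := fun x => {a : A x | C x a}; alph_fin := hC |}.
Arguments idC {Xi A C} hC.

Definition iota Xi (A : SPos Xi) (C : forall x, A x -> Prop) (hC : FinSubset C)
  : SMap (APos (idC hC)) (subP A C).
Proof. refine (Build_SMap _ (APos (idC hC)) (subP A C) (fun x a => a) _). intros x a b h; simpl in h; subst; apply le_refl. Defined.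
Arguments iota {Xi A C} hC.

Definition DefEmbedded Xi (M : Monad Xi) (L : Family M) (A : Alg M)
  (C : forall x, A x -> Prop) (hC : FinSubset C) : Prop :=
  forall xi (a : A xi),
    defL L (fun s : M (APos (idC hC)) xi =>
              le A a (api A xi (Mmap M (incl A C) xi (Mmap M (iota hC) xi s)))).
Arguments DefEmbedded {Xi M} L {A C} hC.

Definition LDefAlg Xi (M : Monad Xi) (L : Family M) (A : Alg M) : Prop :=
  Finitary A /\ forall (C : forall x, A x -> Prop) (hC : FinSubset C), DefEmbedded L (A := A) hC.
Arguments LDefAlg {Xi M} L A.

Definition Hat Xi (M : Monad Xi) (X : Alphabet Xi) (xi : Xi) :=
  { t : forall A : Alg M, Finitary A -> Hom (FreeAlg M X) A -> A xi |
    forall (A B : Alg M) (hA : Finitary A) (hB : Finitary B) (phi : Hom A B)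
           (beta : Hom (FreeAlg M X) A),
      phi xi (t A hA beta) = t B hB (compH phi beta) }.
Arguments Hat {Xi} M X xi.

Definition holdsIn Xi (M : Monad Xi) (X : Alphabet Xi) (xi : Xi) (A : Alg M)
  (s t : Hat M X xi) : Prop :=
  forall (hA : Finitary A) (beta : Hom (FreeAlg M X) A),
    le A (proj1_sig s A hA beta) (proj1_sig t A hA beta).

Arguments holdsIn {Xi M X xi} A s t.

(** A formula defining [K] lies in some sort-wise finite [Δ] whose theory
    preorder [⊑_Δ] is a congruence ordering, and then [⊑_Δ] refines the
    syntactic preorder [≼_K].  Conversely, a set that is upwards closed for the
    preorder [⊑_Φ] of a finite list [Φ] of formulae is a positive Boolean
    combination of members of [Φ]; as definability is preserved by preimages
    under morphisms of free algebras, which lift along the surjection onto any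
    quotient of [Θ_Δ Γ], every language recognised by such a quotient is
    definable.  This reduces all characterisations but (8) to "[⊑_Δ] refines
    [≼_K] for some [Δ]".

    If [K] is not definable, each finite list [F] of formulae admits [s_F ∈ K]
    and [t_F ∉ K] with [s_F ⊑_F t_F].  The limits of [(s_F)] and [(t_F)] along
    an ultrafilter refining the cofinal filter on finite lists are profinite
    terms.  Their inequality holds in every theory algebra, which only sees
    finitely many formulae, but fails in [Syn(K)]. *)

From Pilot Require Import Defs.
From Stdlib Require Import List Classical ClassicalEpsilon FunctionalExtensionality PropExtensionality ProofIrrelevance.
From mathcomp Require filter.
Set Bullet Behavior "Strict Subproofs".

Section FreeAlgebras.
Context {Xi : Type} (M : Monad Xi).

Lemma smap_ext (A B : SPos Xi) (f g : SMap A B) :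
  (forall x a, f x a = g x a) -> f = g.
Proof.
  destruct f as [f hf], g as [g hg]; simpl; intros H.
  assert (E : f = g).
  { apply functional_extensionality_dep; intro x; apply functional_extensionality; apply H. }
  subst g. f_equal. apply proof_irrelevance.
Qed.

Lemma hom_ext (A B : Alg M) (h k : Hom A B) :
  (forall x a, h x a = k x a) -> h = k.
Proof.
  destruct h as [h hh], k as [k hk]; simpl; intros H.
  assert (E : h = k) by (apply smap_ext; exact H).
  subst k. f_equal. apply proof_irrelevance.
Qed.

Lemma Mmap_ext (A B : SPos Xi) (f g : SMap A B) :
  (forall x a, f x a = g x a) -> forall x s, Mmap M f x s = Mmap M g x s.
Proof. intros H; rewrite (smap_ext _ _ f g H); reflexivity. Qed.

(** Witness for the standard ordering: map each [a] to the pair [(f a, g a)]. *)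
Lemma Mmap_le_pointwise (A B : SPos Xi) (f g : SMap A B) :
  (forall x a, le B (f x a) (g x a)) -> forall x s, le (M B) (Mmap M f x s) (Mmap M g x s).
Proof.
  intros H x s.
  pose (pair_fg := Build_SMap _ A (LeRel B)
         (fun y a => exist (fun q : B y * B y => le B (fst q) (snd q)) (f y a, g y a) (H y a))
         (fun y a b hab => conj (fn_mono f hab) (fn_mono g hab))).
  apply (proj2 (M_std _ M B x _ _)).
  exists (Mmap M pair_fg x s).
  split; rewrite <- Mmap_comp; apply Mmap_ext; reflexivity.
Qed.

Definition dmap (S : Alphabet Xi) (A : SPos Xi) (f : forall x, S x -> A x) : SMap (APos S) A.
Proof. refine (Build_SMap _ (APos S) A f _). intros x a b h; simpl in h; subst; apply le_refl. Defined.

Lemma hom_free_api (S : Alphabet Xi) (A : Alg M) (h : Hom (FreeAlg M S) A) x s :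
  h x s = api A x (Mmap M (compmap (hmap h) (sing M (A := APos S))) x s).
Proof. rewrite Mmap_comp, <- (hcomm h). simpl. rewrite flat_Msing. reflexivity. Qed.

Lemma hom_free_eq (S : Alphabet Xi) (A : Alg M) (h k : Hom (FreeAlg M S) A) :
  (forall x (c : S x), h x (sing M (A := APos S) x c) = k x (sing M (A := APos S) x c)) ->
  forall x s, h x s = k x s.
Proof.
  intros H x s. rewrite (hom_free_api _ _ h), (hom_free_api _ _ k). f_equal.
  apply Mmap_ext. intros y c. apply H.
Qed.

Definition free_ext (S : Alphabet Xi) (A : Alg M) (g : SMap (APos S) A) : Hom (FreeAlg M S) A.
Proof.
  refine (Build_Hom _ M (FreeAlg M S) A (compmap (api A) (Mmap M g)) _).
  intros x s. simpl. rewrite flat_nat, <- alg_assoc, Mmap_comp. reflexivity.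
Defined.

Lemma free_ext_sing (S : Alphabet Xi) (A : Alg M) (g : SMap (APos S) A) x c :
  free_ext S A g x (sing M (A := APos S) x c) = g x c.
Proof. simpl. rewrite sing_nat. apply alg_unit. Qed.

Lemma free_lift (S : Alphabet Xi) (A B : Alg M) (e : Hom B A) (f : Hom (FreeAlg M S) A) :
  ssurjective e -> exists h : Hom (FreeAlg M S) B, forall x s, e x (h x s) = f x s.
Proof.
  intros He.
  pose (g := fun x (c : S x) =>
         proj1_sig (constructive_indefinite_description _ (He x (f x (sing M (A := APos S) x c))))).
  assert (Hg : forall x c, e x (g x c) = f x (sing M (A := APos S) x c)).
  { intros x c. unfold g. destruct (constructive_indefinite_description _ _). assumption. }
  exists (free_ext S B (dmap S B g)).
  intros x s.
  change (compH e (free_ext S B (dmap S B g)) x s = f x s).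
  apply hom_free_eq. intros y c. simpl compH. simpl hmap.
  change (e y (free_ext S B (dmap S B g) y (sing M (A := APos S) y c)) = f y (sing M (A := APos S) y c)).
  rewrite free_ext_sing. apply Hg.
Qed.

End FreeAlgebras.

Section Quotients.
Context {Xi : Type} (M : Monad Xi).

Section QuotientPoset.
Context {A : SPos Xi} (R : CPre A).

Lemma qmap_eq x (a b : A x) : R x a b -> R x b a -> qmap R x a = qmap R x b.
Proof.
  intros h1 h2. simpl.
  assert (E : cls R a = cls R b).
  { apply functional_extensionality; intro c; apply propositional_extensionality.
    unfold cls; split; intros [u v]; split; eauto using rel_trans. }
  clear h1 h2. revert E.
  generalize (ex_intro (fun a0 : A x => cls R a = cls R a0) a eq_refl).
  generalize (ex_intro (fun a0 : A x => cls R b = cls R a0) b eq_refl).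
  intros e1 e2 E. revert e2. rewrite E. intros e2. f_equal. apply proof_irrelevance.
Qed.

Lemma qmap_le x (a b : A x) : R x a b -> le (QPos R) (qmap R x a) (qmap R x b).
Proof. intros h. exists a, b. simpl. unfold cls. repeat split; try apply rel_refl; exact h. Qed.

Lemma qmap_le_inv x (a b : A x) : le (QPos R) (qmap R x a) (qmap R x b) -> R x a b.
Proof.
  intros [u [v [h1 [h2 h3]]]]. simpl in *. unfold cls in *.
  apply rel_trans with u; [tauto|]. apply rel_trans with v; tauto.
Qed.

Lemma qmap_surj : ssurjective (qmap R).
Proof. intros x [P [a ->]]. exists a. simpl. f_equal. Qed.

End QuotientPoset.

Section QuotientAlgebra.
Context (A : Alg M) (R : CPre A) (HR : cong_ord R).

Definition quot_lift x (u : M (QPos R) x) : M A x :=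
  proj1_sig (constructive_indefinite_description _ (M_surj _ M _ _ (qmap R) (qmap_surj R) x u)).

Lemma quot_lift_spec x u : Mmap M (qmap R) x (quot_lift x u) = u.
Proof. unfold quot_lift. destruct (constructive_indefinite_description _ _); assumption. Qed.

Definition quot_api_fn x (u : M (QPos R) x) : QPos R x := qmap R x (api A x (quot_lift x u)).

(** The congruence property makes [quot_api_fn] independent of the chosen lift. *)
Lemma quot_api_qmap x (s : M A x) : quot_api_fn x (Mmap M (qmap R) x s) = qmap R x (api A x s).
Proof.
  unfold quot_api_fn. assert (E := quot_lift_spec x (Mmap M (qmap R) x s)).
  apply qmap_eq; apply HR; rewrite E; apply le_refl.
Qed.

Definition quot_api : SMap (M (QPos R)) (QPos R).
Proof.
  refine (Build_SMap _ _ _ quot_api_fn _).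
  intros x u v h. unfold quot_api_fn. apply qmap_le, HR. rewrite !quot_lift_spec. exact h.
Defined.

Definition quot_alg : Alg M.
Proof.
  refine {| acar := QPos R; api := quot_api |}.
  - intros x S.
    destruct (M_surj _ M _ _ _ (M_surj _ M _ _ (qmap R) (qmap_surj R)) x S) as [S' <-].
    simpl. rewrite <- Mmap_comp.
    rewrite (Mmap_ext M _ _ (compmap quot_api (Mmap M (qmap R))) (compmap (qmap R) (api A))).
    2:{ intros y a. apply quot_api_qmap. }
    rewrite Mmap_comp, quot_api_qmap, <- flat_nat, quot_api_qmap, alg_assoc. reflexivity.
  - intros x a. destruct (qmap_surj R x a) as [b <-]. simpl.
    change (quot_api_fn x (sing M x (qmap R x b)) = qmap R x b).
    rewrite <- sing_nat, quot_api_qmap, alg_unit. reflexivity.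
Defined.

Definition quot_hom : Hom A quot_alg.
Proof.
  refine (Build_Hom _ M A quot_alg (qmap R) _).
  intros x s. symmetry. apply quot_api_qmap.
Defined.

End QuotientAlgebra.

Lemma hom_factor (B A1 A2 : Alg M) (e1 : Hom B A1) (e2 : Hom B A2) :
  ssurjective e1 ->
  (forall z s t, le A1 (e1 z s) (e1 z t) -> le A2 (e2 z s) (e2 z t)) ->
  exists rho : Hom A1 A2, forall z s, e2 z s = rho z (e1 z s).
Proof.
  intros He1 Hm.
  pose (pre := fun x (c : A1 x) => proj1_sig (constructive_indefinite_description _ (He1 x c))).
  assert (Hpre : forall x c, e1 x (pre x c) = c).
  { intros x c. unfold pre. destruct (constructive_indefinite_description _ _). assumption. }
  assert (Hwd : forall z s t, e1 z s = e1 z t -> e2 z s = e2 z t).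
  { intros z s t E. apply le_antisym; apply Hm; rewrite E; apply le_refl. }
  assert (mono : forall x (c d : A1 x), le A1 c d -> le A2 (e2 x (pre x c)) (e2 x (pre x d))).
  { intros x c d h. apply Hm. rewrite !Hpre. exact h. }
  pose (r := Build_SMap _ A1 A2 (fun x c => e2 x (pre x c)) mono).
  assert (Hr : forall z s, e2 z s = r z (e1 z s)).
  { intros z s. apply Hwd. simpl. rewrite Hpre. reflexivity. }
  assert (Hhom : forall x (u : M A1 x), r x (api A1 x u) = api A2 x (Mmap M r x u)).
  { intros x u. destruct (M_surj _ M _ _ _ He1 x u) as [v <-].
    rewrite <- (hcomm e1), <- Hr, (hcomm e2), <- Mmap_comp.
    f_equal. apply Mmap_ext. intros y a. apply Hr. }
  exists (Build_Hom _ M A1 A2 r Hhom). exact Hr.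
Qed.

Lemma cong_ord_fill (S : Alphabet Xi) (R : CPre (FreeAlg M S)) (HR : cong_ord R) z x
  (p : M (APos (SH S z)) x) (s t : M (APos S) z) :
  R z s t -> R x (fill p s) (fill p t).
Proof.
  intros Hst. apply HR. rewrite <- !Mmap_comp. apply Mmap_le_pointwise.
  intros y [a|e].
  - apply qmap_le, rel_refl.
  - destruct e. apply qmap_le, Hst.
Qed.

End Quotients.

Lemma finite_image_of_kernel {X Y Z : Type} (g : X -> Y) (h : X -> Z) :
  (forall x x', h x = h x' -> g x = g x') ->
  (exists lz : list Z, forall z, In z lz) -> exists ly : list Y, forall x, In (g x) ly.
Proof.
  intros Hk [lz Hlz].
  enough (H : forall l, exists ly, forall x, In (h x) l -> In (g x) ly).
  { destruct (H lz) as [ly Hly]. exists ly. intros x. apply Hly, Hlz. }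
  induction l as [|c l [ly Hly]].
  - exists nil. intros x [].
  - destruct (classic (exists x0, h x0 = c)) as [[x0 Hx0]|Hnone].
    + exists (g x0 :: ly). intros x [Hc|Hin]; [left|right; auto].
      apply Hk. congruence.
    + exists ly. intros x [Hc|Hin]; [exfalso; eauto|auto].
Qed.

Lemma finite_image_of_profile {X Y F : Type} (holds : F -> X -> Prop) (f : X -> Y) (l : list F) :
  (forall s t, (forall psi, In psi l -> (holds psi s <-> holds psi t)) -> f s = f t) ->
  exists ly : list Y, forall s, In (f s) ly.
Proof.
  intros Hf.
  enough (H : forall l' (P : X -> Prop),
             (forall s t, P s -> P t -> (forall psi, In psi l' -> (holds psi s <-> holds psi t)) ->
                f s = f t) ->
             exists ly, forall s, P s -> In (f s) ly).
  { destruct (H l (fun _ => True)) as [ly Hly]; [intros s t _ _; apply Hf|].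
    exists ly. intros s. apply Hly. exact I. }
  induction l' as [|psi l' IH]; intros P HP.
  - destruct (classic (exists s0, P s0)) as [[s0 Hs0]|Hnone].
    + exists (f s0 :: nil). intros s Hs. left. apply HP; [exact Hs0|exact Hs|intros ? []].
    + exists nil. intros s Hs. apply Hnone. eauto.
  - destruct (IH (fun s => P s /\ holds psi s)) as [l1 H1].
    { intros s t [Ps Hs] [Pt Ht] Hst. apply HP; auto. intros phi [<-|Hin]; [tauto|auto]. }
    destruct (IH (fun s => P s /\ ~ holds psi s)) as [l2 H2].
    { intros s t [Ps Hs] [Pt Ht] Hst. apply HP; auto. intros phi [<-|Hin]; [tauto|auto]. }
    exists (l1 ++ l2). intros s Ps. apply in_or_app.
    destruct (classic (holds psi s)); [left; apply H1|right; apply H2]; auto.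
Qed.

Section FiniteGeneration.
Context {Xi : Type} (M : Monad Xi).

Lemma image_FinSubset (S : Alphabet Xi) (A : SPos Xi) (g : forall x, S x -> A x) :
  FinSubset (fun x a => exists c, g x c = a).
Proof.
  destruct (alph_fin S) as [l Hl].
  exists (map (fun p : {x : Xi & S x} => existT (fun x => {a : A x | exists c, g x c = a})
             (projT1 p) (exist _ (g (projT1 p) (projT2 p)) (ex_intro _ (projT2 p) eq_refl))) l).
  intros x [a [c <-]].
  apply in_map_iff. exists (existT _ x c). split; [|apply Hl].
  reflexivity.
Qed.

Lemma FinGen_of_surj (S : Alphabet Xi) (A : Alg M) (e : Hom (FreeAlg M S) A) :
  ssurjective e -> FinGen A.
Proof.
  intros He.
  set (C := fun x a => exists c : S x, e x (sing M (A := APos S) x c) = a).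
  exists C. split; [apply image_FinSubset|].
  intros x a. destruct (He x a) as [s <-].
  pose (k := dmap S (subP A C)
               (fun y c => exist (C y) (e y (sing M (A := APos S) y c)) (ex_intro _ c eq_refl))).
  exists (Mmap M k x s).
  rewrite <- Mmap_comp, (hom_free_api M S A e). f_equal. apply Mmap_ext. reflexivity.
Qed.

End FiniteGeneration.

Section Definability.
Context {Xi : Type} {M : Monad Xi} (L : Family M).

Lemma defL_ext S x (K1 K2 : Lang M S x) : (forall s, K1 s <-> K2 s) -> defL L K1 -> defL L K2.
Proof. intros H [phi Hphi]. exists phi. intros s. rewrite <- H. apply Hphi. Qed.

Lemma defL_sat S x (phi : form L S x) : defL L (fun s => sat L phi s).
Proof. exists phi. reflexivity. Qed.

Definition tle_list S x (l : list (form L S x)) (s t : M (APos S) x) : Prop :=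
  forall psi, In psi l -> sat L psi s -> sat L psi t.

Lemma tle_list_tle (D : Subfam L) S x (l : list (form L S x)) :
  (forall phi, D S x phi -> exists psi, In psi l /\ feq phi psi) ->
  forall s t, tle_list S x l s t -> tle D S s t.
Proof.
  intros Hl s t Hst phi Hphi Hs. destruct (Hl phi Hphi) as [psi [Hin Heq]].
  apply Heq, Hst, Heq; assumption.
Qed.

(** [A] is a quotient of [Θ_Δ G], presented by a surjection [e] through which [θ_Δ] factors. *)
Definition ThetaQuotient (D : Subfam L) (G : Alphabet Xi) (A : Alg M)
  (e : Hom (FreeAlg M G) A) : Prop :=
  ssurjective e /\ forall z (s t : M (APos G) z), tle D G s t -> le A (e z s) (e z t).

Lemma IsTheta_ThetaQuotient (D : Subfam L) G (T : Alg M) (th : Hom (FreeAlg M G) T) :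
  IsTheta D G th -> ThetaQuotient D G T th.
Proof. intros [Hs Hle]. split; [exact Hs|]. intros z s t. apply Hle. Qed.

Lemma ThetaQuotient_comp (D : Subfam L) G (A B : Alg M) (e : Hom (FreeAlg M G) A) (r : Hom A B) :
  ThetaQuotient D G A e -> ssurjective r -> ThetaQuotient D G B (compH r e).
Proof.
  intros [He Hle] Hr. split.
  - intros z b. destruct (Hr z b) as [a <-]. destruct (He z a) as [s <-]. exists s. reflexivity.
  - intros z s t Hst. apply (fn_mono r), Hle, Hst.
Qed.

(** [e s] is determined by which representatives of [Δ] hold at [s]. *)
Lemma ThetaQuotient_finitary (D : Subfam L) G (A : Alg M) (e : Hom (FreeAlg M G) A) :
  SortFin D -> ThetaQuotient D G A e -> Finitary A.
Proof.
  intros HD [He Hle]. split; [|exact (FinGen_of_surj M G A e He)].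
  intros z. destruct (HD G z) as [l Hl].
  destruct (finite_image_of_profile (fun psi s => sat L psi s) (e z) l) as [la Hla].
  - intros s t Hst. apply le_antisym; apply Hle, (tle_list_tle D G z l Hl);
      intros psi Hin; apply Hst, Hin.
  - exists la. intros a. destruct (He z a) as [s <-]. apply Hla.
Qed.

Lemma theta_exists (D : Subfam L) (HD : ThetaDef D) (S : Alphabet Xi) :
  exists (T : Alg M) (th : Hom (FreeAlg M S) T), IsTheta D S th.
Proof.
  destruct (HD S) as [R [HRe HR]].
  exists (quot_alg M (FreeAlg M S) R HR), (quot_hom M (FreeAlg M S) R HR).
  split; [apply qmap_surj|].
  intros z s t. simpl. rewrite <- HRe. split; [apply qmap_le_inv|apply qmap_le].
Qed.

Context (HLv : Varietal L).

Lemma defL_False S x : defL L (fun _ : M (APos S) x => False).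
Proof. apply HLv. Qed.

Lemma defL_True S x : defL L (fun _ : M (APos S) x => True).
Proof. apply HLv. Qed.

Lemma defL_or S x (K1 K2 : Lang M S x) :
  defL L K1 -> defL L K2 -> defL L (fun s => K1 s \/ K2 s).
Proof. apply HLv. Qed.

Lemma defL_and S x (K1 K2 : Lang M S x) :
  defL L K1 -> defL L K2 -> defL L (fun s => K1 s /\ K2 s).
Proof. apply HLv. Qed.

Lemma defL_preimage S G (h : Hom (FreeAlg M S) (FreeAlg M G)) x (K : Lang M G x) :
  defL L K -> defL L (fun s => K (h x s)).
Proof. apply HLv. Qed.

Lemma defL_exists_list {T : Type} S x (l : list T) (E : T -> Prop) (Lg : T -> Lang M S x) :
  (forall a, In a l -> E a -> defL L (Lg a)) ->
  defL L (fun s => exists a, In a l /\ E a /\ Lg a s).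
Proof.
  induction l as [|a l IH]; intros H.
  - eapply defL_ext; [|apply defL_False]. intros s. split; [intros []|intros [a [[] _]]].
  - assert (IH' := IH (fun b hb => H b (or_intror hb))).
    destruct (classic (E a)) as [Ea|nEa].
    + eapply defL_ext; [|exact (defL_or _ _ _ _ (H a (or_introl eq_refl) Ea) IH')].
      intros s. split.
      * intros [h|[b [hb [eb lb]]]]; [exists a|exists b]; simpl; auto.
      * intros [b [[<-|hb] [eb lb]]]; [left; auto|right; exists b; auto].
    + eapply defL_ext; [|exact IH'].
      intros s. split.
      * intros [b [hb [eb lb]]]; exists b; simpl; auto.
      * intros [b [[<-|hb] [eb lb]]]; [contradiction|exists b; auto].
Qed.

(** Recursion on [l]: an upwards closed [U] is [(ψ ∧ U1) ∨ U2], where [U1]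
    and [U2] are the upward closures for the tail of [l] of the parts of [U]
    where [ψ] holds, resp. fails. *)
Lemma defL_of_tle_list_upclosed S x (l : list (form L S x)) (U : Lang M S x) :
  (forall s t, tle_list S x l s t -> U s -> U t) -> defL L U.
Proof.
  revert U. induction l as [|psi l IH]; intros U HU.
  - destruct (classic (exists s, U s)) as [[s Hs]|Hnone].
    + eapply defL_ext; [|apply defL_True].
      intros t. split; [intros _; apply (HU s); [intros ? []|exact Hs]|intros; exact I].
    + eapply defL_ext; [|apply defL_False]. intros t. split; [intros []|intros Ht; apply Hnone; eauto].
  - pose (up := fun (V : Lang M S x) t => exists s, V s /\ tle_list S x l s t).
    assert (Hup : forall V, defL L (up V)).
    { intros V. apply IH. intros t t' Htt' [s [Vs Hst]]. exists s. split; [exact Vs|].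
      intros phi Hin Hs. apply Htt', Hst; assumption. }
    eapply defL_ext;
      [|exact (defL_or _ _ _ _
                 (defL_and _ _ _ _ (defL_sat S x psi) (Hup (fun s => U s /\ sat L psi s)))
                 (Hup (fun s => U s /\ ~ sat L psi s)))].
    intros t. split.
    + intros [[Hpsi [s [[Us _] Hst]]]|[s [[Us Hpsi] Hst]]]; apply (HU s); auto;
        intros phi [<-|Hin] Hs; auto; contradiction.
    + intros Ht. destruct (classic (sat L psi t)) as [Hpsi|Hpsi]; [left; split; [exact Hpsi|]|right];
        exists t; (split; [split; assumption|intros phi _ H; exact H]).
Qed.

Lemma defL_of_tle_upclosed (D : Subfam L) S x (U : Lang M S x) :
  SortFin D -> (forall s t, tle D S s t -> U s -> U t) -> defL L U.
Proof.
  intros HD HU. destruct (HD S x) as [l Hl].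
  apply (defL_of_tle_list_upclosed S x l). intros s t Hst. apply HU.
  exact (tle_list_tle D S x l Hl s t Hst).
Qed.

(** Lifting [f] along [e] to a morphism of free algebras reduces this to the
    preimage of an upwards closed subset of [Θ_Δ G]. *)
Lemma defL_upclosed_preimage (D : Subfam L) G (A : Alg M) (e : Hom (FreeAlg M G) A)
  S (f : Hom (FreeAlg M S) A) x (Q : A x -> Prop) :
  SortFin D -> ThetaQuotient D G A e -> (forall a b, le A a b -> Q a -> Q b) ->
  defL L (fun s => Q (f x s)).
Proof.
  intros HD [He Hle] HQ.
  destruct (free_lift M S A _ e f He) as [h Hh].
  assert (HQe : defL L (fun u : M (APos G) x => Q (e x u))).
  { apply (defL_of_tle_upclosed D G x _ HD). intros s t Hst. apply HQ, Hle, Hst. }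
  eapply defL_ext; [|exact (defL_preimage S G h x _ HQe)].
  intros s. simpl. rewrite Hh. reflexivity.
Qed.

Lemma defL_of_recog (D : Subfam L) G (A : Alg M) (e : Hom (FreeAlg M G) A) S x (K : Lang M S x) :
  SortFin D -> ThetaQuotient D G A e -> algRecog A K -> defL L K.
Proof.
  intros HD He [f [P [HP HPK]]].
  eapply defL_ext; [|exact (defL_upclosed_preimage D G A e S f x P HD He HP)].
  intros s. symmetry. apply HPK.
Qed.

Lemma ThetaQuotient_LDefAlg (D : Subfam L) G (A : Alg M) (e : Hom (FreeAlg M G) A) :
  SortFin D -> ThetaQuotient D G A e -> LDefAlg L A.
Proof.
  intros HD He. split; [exact (ThetaQuotient_finitary D G A e HD He)|].
  intros C hC z a.
  pose (ev := free_ext M (idC hC) A (compmap (Defs.incl A C) (iota hC))).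
  eapply defL_ext;
    [|exact (defL_upclosed_preimage D G A e (idC hC) ev z (fun b => le A a b) HD He
               (fun b c Hbc Hab => le_trans Hab Hbc))].
  intros s. simpl. rewrite Mmap_comp. reflexivity.
Qed.

(** The generators of the image of [f] form a finite subset [C] of [A], and
    [f] factors through the evaluation of [M C]; since [A] is finite, the
    upwards closed set recognising [K] is a finite union of principal filters. *)
Lemma LDefAlg_defL (A : Alg M) S x (K : Lang M S x) :
  LDefAlg L A -> algRecog A K -> defL L K.
Proof.
  intros [[Afin _] HA] [f [P [HP HPK]]].
  set (C := fun y a => exists c : S y, f y (sing M (A := APos S) y c) = a).
  assert (hC : FinSubset C) by apply image_FinSubset.
  pose (ev := free_ext M (idC hC) A (compmap (Defs.incl A C) (iota hC))).
  pose (gen := fun y (c : S y) => sing M (A := APos (idC hC)) y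
                 (exist (C y) (f y (sing M (A := APos S) y c)) (ex_intro _ c eq_refl))).
  pose (k := free_ext M S (FreeAlg M (idC hC)) (dmap S (FreeAlg M (idC hC)) gen)).
  assert (Hk : forall z s, ev z (k z s) = f z s).
  { intros z s. change (compH ev k z s = f z s). apply hom_free_eq. intros y c.
    simpl compH. simpl hmap.
    change (ev y (k y (sing M (A := APos S) y c)) = f y (sing M (A := APos S) y c)).
    unfold k. rewrite free_ext_sing. apply free_ext_sing. }
  destruct (Afin x) as [la Hla].
  assert (Hd : defL L (fun u : M (APos (idC hC)) x =>
                 exists a, In a la /\ P a /\ le A a (ev x u))).
  { apply defL_exists_list. intros a _ _. eapply defL_ext; [|exact (HA C hC x a)].
    intros u. simpl. rewrite Mmap_comp. reflexivity. }
  eapply defL_ext; [|exact (defL_preimage S (idC hC) k x _ Hd)].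
  intros s. cbv beta. rewrite Hk, HPK. split.
  - intros [a [_ [Pa Ha]]]. eapply HP; eauto.
  - intros Hp. exists (f x s). split; [apply Hla|]. split; [exact Hp|apply le_refl].
Qed.

Lemma preimage_formulas S G (h : Hom (FreeAlg M S) (FreeAlg M G)) x (l : list (form L G x)) :
  exists lc : list (form L S x),
    forall psi, In psi l -> exists chi, In chi lc /\ forall u, sat L chi u <-> sat L psi (h x u).
Proof.
  induction l as [|psi l [lc Hlc]].
  - exists nil. intros psi [].
  - destruct (defL_preimage S G h x _ (defL_sat G x psi)) as [chi Hchi].
    exists (chi :: lc). intros psi' [<-|Hin].
    + exists chi. split; [left; reflexivity|]. intros u. symmetry. apply Hchi.
    + destruct (Hlc psi' Hin) as [chi' [Hin' Hchi']]. exists chi'. split; [right|]; auto.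
Qed.

Lemma ThetaQuotient_le_eventually (D : Subfam L) G (A : Alg M) (e : Hom (FreeAlg M G) A)
  S x (s t : list (form L S x) -> M (APos S) x) (beta : Hom (FreeAlg M S) A) :
  SortFin D -> ThetaQuotient D G A e -> (forall F, tle_list S x F (s F) (t F)) ->
  exists F0, forall F, List.incl F0 F -> le A (beta x (s F)) (beta x (t F)).
Proof.
  intros HD [He Hle] Hst.
  destruct (free_lift M S A _ e beta He) as [h Hh].
  destruct (HD G x) as [l Hl].
  destruct (preimage_formulas S G h x l) as [lc Hlc].
  exists lc. intros F HF. rewrite <- !Hh. apply Hle, (tle_list_tle D G x l Hl).
  intros psi Hin Hpsi. destruct (Hlc psi Hin) as [chi [Hchi Hsat]].
  apply Hsat, (Hst F chi (HF chi Hchi)), Hsat, Hpsi.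
Qed.

End Definability.

Section Syntactic.
Context {Xi : Type} {M : Monad Xi} {Sg : Alphabet Xi} {xi : Xi} (K : Lang M Sg xi).

Lemma fill_hole z (s : M (APos Sg) z) :
  fill (sing M (A := APos (SH Sg z)) z (inr eq_refl)) s = s.
Proof. unfold fill. rewrite sing_nat. apply flat_sing. Qed.

Lemma synle_mem (s t : M (APos Sg) xi) : synle K s t -> K s -> K t.
Proof.
  intros H. specialize (H (sing M (A := APos (SH Sg xi)) xi (inr eq_refl))).
  rewrite !fill_hole in H. exact H.
Qed.

Lemma recog_of_surj (A : Alg M) (e : Hom (FreeAlg M Sg) A) :
  ssurjective e -> (forall s t, le A (e xi s) (e xi t) -> K s -> K t) -> recog e K.
Proof.
  intros He Hk. exists (fun a => exists s, K s /\ e xi s = a). split.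
  - intros a b hab [s [Ks <-]]. destruct (He xi b) as [t <-]. exists t. split; [|reflexivity].
    apply (Hk s t); assumption.
  - intros s. split; [intros Ks; exists s; auto|].
    intros [s' [Ks' E]]. apply (Hk s' s); [rewrite E; apply le_refl|exact Ks'].
Qed.

Lemma tle_synle (L : Family M) (D : Subfam L) (phi : form L Sg xi) :
  (forall s, K s <-> sat L phi s) -> D Sg xi phi -> ThetaDef D ->
  forall z (s t : M (APos Sg) z), tle D Sg s t -> synle K s t.
Proof.
  intros Hphi HDphi HT z s t Hst p Hp.
  destruct (HT Sg) as [R [HRe HR]].
  assert (Hfill : R xi (fill p s) (fill p t)) by (apply cong_ord_fill; [exact HR|apply HRe, Hst]).
  apply Hphi, (proj1 (HRe _ _ _) Hfill); [exact HDphi|apply Hphi, Hp].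
Qed.

Context {Syn : Alg M} (syn : Hom (FreeAlg M Sg) Syn) (Hsyn : IsSynAlg K syn).

Lemma syn_recog : recog syn K.
Proof. apply recog_of_surj; [apply Hsyn|]. intros s t h. apply synle_mem, Hsyn, h. Qed.

Lemma syn_finitary : HasSynAlg K -> Finitary Syn.
Proof.
  intros [R [HRe [_ Hfin]]]. split; [|exact (FinGen_of_surj M Sg Syn syn (proj1 Hsyn))].
  intros z. destruct (finite_image_of_kernel (syn z) (qmap R z)) as [lb Hlb].
  - intros s t E. apply le_antisym; apply Hsyn, HRe, qmap_le_inv; rewrite E; apply le_refl.
  - exact (Hfin z).
  - exists lb. intros b. destruct (proj1 Hsyn z b) as [s <-]. apply Hlb.
Qed.

Lemma syn_ThetaQuotient (L : Family M) (D : Subfam L) :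
  (forall z (s t : M (APos Sg) z), tle D Sg s t -> synle K s t) -> ThetaQuotient L D Sg Syn syn.
Proof. intros Hle. split; [apply Hsyn|]. intros z s t Hst. apply Hsyn, Hle, Hst. Qed.

End Syntactic.

Section Ultralimits.
Context {I : Type} (U : classical_sets.set_system I) {HU : filter.UltraFilter U}.

Lemma ultra_limit_unique {T : Type} (g : I -> T) (a b : T) :
  U (fun i => g i = a) -> U (fun i => g i = b) -> a = b.
Proof.
  intros Ha Hb. destruct (filter.filter_ex (filter.filterI Ha Hb)) as [i [<- <-]].
  reflexivity.
Qed.

Lemma ultra_limit_finite {T : Type} (g : I -> T) :
  (exists l : list T, forall a, In a l) -> exists a, U (fun i => g i = a).
Proof.
  intros [l Hl].
  assert (Hsplit : forall l', (exists a, U (fun i => g i = a)) \/ U (fun i => ~ In (g i) l')).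
  { induction l' as [|a l' IH].
    - right. eapply filter.filterS; [|apply filter.filterT]. intros i _ [].
    - destruct (filter.in_ultra_setVsetC (fun i => g i = a) HU) as [Ha|Hna]; [left; eauto|].
      destruct IH as [IH|IH]; [left; exact IH|right].
      eapply filter.filterS; [|exact (filter.filterI Hna IH)].
      intros i [Hi Hi'] [E|Hin]; [apply Hi; symmetry; exact E|apply Hi', Hin]. }
  destruct (Hsplit l) as [H|H]; [exact H|].
  destruct (filter.filter_ex H) as [i Hi]. exfalso. apply Hi, Hl.
Qed.

(** Ultralimits exist in finite algebras and commute with morphisms, so the
    ultralimit of a family of terms is a profinite term. *)
Lemma hat_ultralimit {Xi : Type} (M : Monad Xi) (X : Alphabet Xi) (x : Xi) (w : I -> M (APos X) x) :
  exists h : Hat M X x, forall (A : Alg M) (hA : Finitary A) (beta : Hom (FreeAlg M X) A),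
    U (fun i => beta x (w i) = proj1_sig h A hA beta).
Proof.
  pose (lim := fun (A : Alg M) (hA : Finitary A) (beta : Hom (FreeAlg M X) A) =>
    proj1_sig (constructive_indefinite_description _
      (ultra_limit_finite (fun i => beta x (w i)) (proj1 hA x)))).
  assert (Hlim : forall (A : Alg M) (hA : Finitary A) (beta : Hom (FreeAlg M X) A),
            U (fun i => beta x (w i) = lim A hA beta)).
  { intros A hA beta. unfold lim. destruct (constructive_indefinite_description _ _) as [a Ha].
    exact Ha. }
  unshelve eexists (exist _ lim _); [|exact Hlim].
  intros A B hA hB phi beta. apply (ultra_limit_unique (fun i => phi x (beta x (w i)))).
  - eapply filter.filterS; [|exact (Hlim A hA beta)]. intros i ->. reflexivity.
  - exact (Hlim B hB (compH phi beta)).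
Qed.

End Ultralimits.

Definition cofinal_lists (T : Type) : classical_sets.set_system (list T) :=
  fun A => exists F0, forall F, List.incl F0 F -> A F.

Lemma cofinal_lists_proper (T : Type) : filter.ProperFilter (cofinal_lists T).
Proof.
  apply filter.Build_ProperFilter_ex.
  - intros A [F0 H]. exists F0. apply H, incl_refl.
  - constructor.
    + exists nil. intros F _. exact I.
    + intros A C [F1 H1] [F2 H2]. exists (F1 ++ F2). intros F HF.
      split; [apply H1|apply H2]; intros a Ha; apply HF, in_or_app; auto.
    + intros A C HAC [F0 H]. exists F0. intros F HF. apply HAC, H, HF.
Qed.

Lemma ultrafilter_cofinal_lists (T : Type) :
  exists U : classical_sets.set_system (list T),
    filter.UltraFilter U /\ forall F0, U (fun F => List.incl F0 F).
Proof.
  destruct (filter.ultraFilterLemma (cofinal_lists_proper T)) as [U [HU Hsub]].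
  exists U. split; [exact HU|]. intros F0. apply Hsub. exists F0. auto.
Qed.

Section Characterisation.
Context {Xi : Type} {M : Monad Xi} (L : Family M) (HLc : Compositional L) (HLv : Varietal L)
  {Sg : Alphabet Xi} {xi : Xi} (K : Lang M Sg xi)
  {Syn : Alg M} (syn : Hom (FreeAlg M Sg) Syn) (Hsyn : IsSynAlg K syn).

Definition singleton_fam (phi : form L Sg xi) : Subfam L :=
  fun S x psi => existT (fun S => {x : Xi & form L S x}) S (existT _ x psi) =
                 existT _ Sg (existT _ xi phi).

Lemma defL_tle_synle : defL L K ->
  exists D : Subfam L, SortFin D /\ ThetaDef D /\
    forall z (s t : M (APos Sg) z), tle D Sg s t -> synle K s t.
Proof.
  intros [phi Hphi].
  destruct (HLc (singleton_fam phi)) as [D [HD [Hsub HT]]].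
  { exists (existT _ Sg (existT _ xi phi) :: nil). intros S x psi E. left. symmetry. exact E. }
  exists D. split; [exact HD|]. split; [exact HT|].
  apply (tle_synle K L D phi Hphi); [apply Hsub; reflexivity|exact HT].
Qed.

Lemma defL_syn_theta_factor : defL L K ->
  exists (D : Subfam L) (T : Alg M) (th : Hom (FreeAlg M Sg) T) (rho : Hom T Syn),
    SortFin D /\ ThetaDef D /\ IsTheta D Sg th /\ ssurjective rho /\
    forall z (s : M (APos Sg) z), syn z s = rho z (th z s).
Proof.
  intros H1. destruct (defL_tle_synle H1) as [D [HD [HT Hle]]].
  destruct (theta_exists L D HT Sg) as [T [th Hth]].
  destruct (hom_factor M (FreeAlg M Sg) T Syn th syn (proj1 Hth)) as [rho Hrho].
  { intros z s t h. apply Hsyn, Hle, Hth, h. }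
  exists D, T, th, rho. repeat (split; [assumption|]). split; [|exact Hrho].
  intros z b. destruct (proj1 Hsyn z b) as [s <-]. exists (th z s). symmetry. apply Hrho.
Qed.

Lemma defL_theta_recog : defL L K ->
  exists (D : Subfam L) (T : Alg M) (th : Hom (FreeAlg M Sg) T),
    SortFin D /\ ThetaDef D /\ IsTheta D Sg th /\ recog th K.
Proof.
  intros H1. destruct (defL_tle_synle H1) as [D [HD [HT Hle]]].
  destruct (theta_exists L D HT Sg) as [T [th Hth]].
  exists D, T, th. repeat (split; [assumption|]).
  apply recog_of_surj; [apply Hth|]. intros s t h. apply synle_mem, Hle, Hth, h.
Qed.

Lemma defL_iff_syn_theta_quotient : defL L K <->
  exists (D : Subfam L) (G : Alphabet Xi) (T : Alg M) (th : Hom (FreeAlg M G) T),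
    SortFin D /\ ThetaDef D /\ IsTheta D G th /\ isQuot T Syn.
Proof.
  split.
  - intros H1. destruct (defL_syn_theta_factor H1) as (D & T & th & rho & HD & HT & Hth & Hrho & _).
    exists D, Sg, T, th. repeat (split; [assumption|]). exists rho. exact Hrho.
  - intros (D & G & T & th & HD & _ & Hth & rho & Hrho).
    apply (defL_of_recog L HLv D G Syn (compH rho th) Sg xi K HD).
    + exact (ThetaQuotient_comp L D G T Syn th rho (IsTheta_ThetaQuotient L D G T th Hth) Hrho).
    + exists syn. exact (syn_recog K syn Hsyn).
Qed.

Lemma defL_iff_syn_theta_factor : defL L K <->
  exists (D : Subfam L) (T : Alg M) (th : Hom (FreeAlg M Sg) T) (rho : Hom T Syn),
    SortFin D /\ ThetaDef D /\ IsTheta D Sg th /\ ssurjective rho /\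
    forall z (s : M (APos Sg) z), syn z s = rho z (th z s).
Proof.
  split; [exact defL_syn_theta_factor|].
  intros (D & T & th & rho & HD & HT & Hth & Hrho & _).
  apply defL_iff_syn_theta_quotient. exists D, Sg, T, th.
  repeat (split; [assumption|]). exists rho. exact Hrho.
Qed.

Lemma defL_iff_theta_recog : defL L K <->
  exists (D : Subfam L) (G : Alphabet Xi) (T : Alg M) (th : Hom (FreeAlg M G) T),
    SortFin D /\ ThetaDef D /\ IsTheta D G th /\ algRecog T K.
Proof.
  split.
  - intros H1. destruct (defL_theta_recog H1) as (D & T & th & HD & HT & Hth & HthK).
    exists D, Sg, T, th. repeat (split; [assumption|]). exists th. exact HthK.
  - intros (D & G & T & th & HD & _ & Hth & HTK).
    exact (defL_of_recog L HLv D G T th Sg xi K HD (IsTheta_ThetaQuotient L D G T th Hth) HTK).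
Qed.

Lemma defL_iff_theta_map_recog : defL L K <->
  exists (D : Subfam L) (T : Alg M) (th : Hom (FreeAlg M Sg) T),
    SortFin D /\ ThetaDef D /\ IsTheta D Sg th /\ recog th K.
Proof.
  split; [exact defL_theta_recog|].
  intros (D & T & th & HD & HT & Hth & HthK).
  apply defL_iff_theta_recog. exists D, Sg, T, th.
  repeat (split; [assumption|]). exists th. exact HthK.
Qed.

Lemma defL_iff_tle_upclosed : defL L K <->
  exists D : Subfam L, SortFin D /\ forall s t : M (APos Sg) xi, tle D Sg s t -> K s -> K t.
Proof.
  split.
  - intros H1. destruct (defL_tle_synle H1) as (D & HD & _ & Hle).
    exists D. split; [exact HD|]. intros s t Hst. apply synle_mem, Hle, Hst.
  - intros (D & HD & HDK). exact (defL_of_tle_upclosed L HLv D Sg xi K HD HDK).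
Qed.

Lemma defL_iff_tle_synle : defL L K <->
  exists D : Subfam L, SortFin D /\ forall z (s t : M (APos Sg) z), tle D Sg s t -> synle K s t.
Proof.
  split.
  - intros H1. destruct (defL_tle_synle H1) as (D & HD & _ & Hle). eauto.
  - intros (D & HD & Hle).
    apply (defL_of_recog L HLv D Sg Syn syn Sg xi K HD (syn_ThetaQuotient K syn Hsyn L D Hle)).
    exists syn. exact (syn_recog K syn Hsyn).
Qed.

Lemma defL_syn_inequalities : defL L K ->
  forall (X : Alphabet Xi) (x : Xi) (s t : Hat M X x),
    (forall (D : Subfam L) (G : Alphabet Xi) (T : Alg M) (th : Hom (FreeAlg M G) T),
        SortFin D -> ThetaDef D -> IsTheta D G th -> holdsIn T s t) ->
    holdsIn Syn s t.
Proof.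
  intros H1 X x s t Hthetas hS beta.
  destruct (defL_syn_theta_factor H1) as [D [T [th [rho [HD [HT [Hth [Hrho _]]]]]]]].
  destruct (free_lift M X Syn T rho beta Hrho) as [beta' Hbeta'].
  pose proof (ThetaQuotient_finitary L D Sg T th HD (IsTheta_ThetaQuotient L D Sg T th Hth)) as hT.
  pose proof (fn_mono rho (Hthetas D Sg T th HD HT Hth hT beta')) as Hle.
  rewrite (proj2_sig s T Syn hT hS rho beta'), (proj2_sig t T Syn hT hS rho beta') in Hle.
  replace beta with (compH rho beta'); [exact Hle|].
  apply hom_ext. intros y a. apply Hbeta'.
Qed.

Lemma syn_inequalities_defL : HasSynAlg K ->
  (forall (X : Alphabet Xi) (x : Xi) (s t : Hat M X x),
    (forall (D : Subfam L) (G : Alphabet Xi) (T : Alg M) (th : Hom (FreeAlg M G) T),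
        SortFin D -> ThetaDef D -> IsTheta D G th -> holdsIn T s t) ->
    holdsIn Syn s t) ->
  defL L K.
Proof.
  intros HK Hineq. apply NNPP. intros nK.
  assert (Hwit : forall F : list (form L Sg xi), exists p : M (APos Sg) xi * M (APos Sg) xi,
            tle_list L Sg xi F (fst p) (snd p) /\ K (fst p) /\ ~ K (snd p)).
  { intros F. apply NNPP. intros Hno. apply nK, (defL_of_tle_list_upclosed L HLv Sg xi F).
    intros s t Hst Ks. apply NNPP. intros nKt. apply Hno. exists (s, t). auto. }
  destruct (choice _ Hwit) as [w Hw].
  destruct (ultrafilter_cofinal_lists (form L Sg xi)) as [U [HU Hcof]].
  destruct (hat_ultralimit U M Sg xi (fun F => fst (w F))) as [hs Hs].
  destruct (hat_ultralimit U M Sg xi (fun F => snd (w F))) as [ht Ht].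
  assert (Hthetas : forall (D : Subfam L) G (T : Alg M) (th : Hom (FreeAlg M G) T),
             SortFin D -> ThetaDef D -> IsTheta D G th -> holdsIn T hs ht).
  { intros D G T th HD _ Hth hT beta.
    destruct (ThetaQuotient_le_eventually L HLv D G T th Sg xi (fun F => fst (w F))
                (fun F => snd (w F)) beta HD (IsTheta_ThetaQuotient L D G T th Hth)
                (fun F => proj1 (Hw F))) as [F0 HF0].
    destruct (filter.filter_ex
                (filter.filterI (Hcof F0) (filter.filterI (Hs T hT beta) (Ht T hT beta))))
      as [F [HF [Es Et]]].
    rewrite <- Es, <- Et. exact (HF0 F HF). }
  pose proof (syn_finitary K syn Hsyn HK) as hSyn.
  pose proof (Hineq Sg xi hs ht Hthetas hSyn syn) as Hle.
  destruct (filter.filter_ex (filter.filterI (Hs Syn hSyn syn) (Ht Syn hSyn syn))) as [F [Es Et]].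
  destruct (Hw F) as [_ [Ks nKt]].
  apply nKt, (synle_mem K (fst (w F))); [|exact Ks].
  apply Hsyn. rewrite Es, Et. exact Hle.
Qed.

Lemma defL_iff_LDefAlg_recog : defL L K <-> exists A : Alg M, LDefAlg L A /\ algRecog A K.
Proof.
  split.
  - intros H1. destruct (defL_tle_synle H1) as [D [HD [_ Hle]]].
    exists Syn. split.
    + exact (ThetaQuotient_LDefAlg L HLv D Sg Syn syn HD (syn_ThetaQuotient K syn Hsyn L D Hle)).
    + exists syn. exact (syn_recog K syn Hsyn).
  - intros [A [HA HAK]]. exact (LDefAlg_defL L HLv A Sg xi K HA HAK).
Qed.

Lemma defL_iff_syn_LDefAlg : defL L K <-> LDefAlg L Syn.
Proof.
  split.
  - intros H1. destruct (defL_tle_synle H1) as [D [HD [_ Hle]]].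
    exact (ThetaQuotient_LDefAlg L HLv D Sg Syn syn HD (syn_ThetaQuotient K syn Hsyn L D Hle)).
  - intros HSyn. exact (LDefAlg_defL L HLv Syn Sg xi K HSyn (ex_intro _ syn (syn_recog K syn Hsyn))).
Qed.
End Characterisation.

Theorem theorem9p13 (Xi : Type) (M : Monad Xi) (L : Family M)
  (HLc : Compositional L) (HLv : Varietal L)
  (Sg : Alphabet Xi) (xi : Xi) (K : Lang M Sg xi) (HK : HasSynAlg K)
  (Syn : Alg M) (syn : Hom (FreeAlg M Sg) Syn) (Hsyn : IsSynAlg K syn) :
  let P1 := defL L K in
  let P2 := exists A : Alg M, LDefAlg L A /\ algRecog A K in
  let P3 := LDefAlg L Syn in
  let P4 := exists (D : Subfam L) (G : Alphabet Xi) (T : Alg M) (th : Hom (FreeAlg M G) T),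
              SortFin D /\ ThetaDef D /\ IsTheta D G th /\ isQuot T Syn in
  let P5 := exists (D : Subfam L) (T : Alg M) (th : Hom (FreeAlg M Sg) T) (rho : Hom T Syn),
              SortFin D /\ ThetaDef D /\ IsTheta D Sg th /\ ssurjective rho /\
              forall z (s : M (APos Sg) z), syn z s = rho z (th z s) in
  let P6 := exists (D : Subfam L) (G : Alphabet Xi) (T : Alg M) (th : Hom (FreeAlg M G) T),
              SortFin D /\ ThetaDef D /\ IsTheta D G th /\ algRecog T K in
  let P7 := exists (D : Subfam L) (T : Alg M) (th : Hom (FreeAlg M Sg) T),
              SortFin D /\ ThetaDef D /\ IsTheta D Sg th /\ recog th K in
  let P8 := forall (X : Alphabet Xi) (x : Xi) (s t : Hat M X x),
              (forall (D : Subfam L) (G : Alphabet Xi) (T : Alg M) (th : Hom (FreeAlg M G) T),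
                  SortFin D -> ThetaDef D -> IsTheta D G th -> holdsIn T s t) ->
              holdsIn Syn s t in
  let P9 := exists D : Subfam L, SortFin D /\
              forall s t : M (APos Sg) xi, tle D Sg s t -> K s -> K t in
  let P10 := exists D : Subfam L, SortFin D /\
              forall z (s t : M (APos Sg) z), tle D Sg s t -> synle K s t in
  (P1 <-> P2) /\ (P1 <-> P3) /\ (P1 <-> P4) /\ (P1 <-> P5) /\ (P1 <-> P6) /\
  (P1 <-> P7) /\ (P1 <-> P8) /\ (P1 <-> P9) /\ (P1 <-> P10).
Proof.
  cbv zeta.
  split; [exact (defL_iff_LDefAlg_recog L HLc HLv K syn Hsyn)|].
  split; [exact (defL_iff_syn_LDefAlg L HLc HLv K syn Hsyn)|].
  split; [exact (defL_iff_syn_theta_quotient L HLc HLv K syn Hsyn)|].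
  split; [exact (defL_iff_syn_theta_factor L HLc HLv K syn Hsyn)|].
  split; [exact (defL_iff_theta_recog L HLc HLv K)|].
  split; [exact (defL_iff_theta_map_recog L HLc HLv K)|].
  split; [split; [exact (defL_syn_inequalities L HLc K syn Hsyn)
                 |exact (syn_inequalities_defL L HLv K syn Hsyn HK)]|].
  split; [exact (defL_iff_tle_upclosed L HLc HLv K)|].
  exact (defL_iff_tle_synle L HLc HLv K syn Hsyn).
Qed.
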